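(* Let $m, n$ be positive integers with $m \mid n$. Then $\mathcal{L}_n \subseteq \mathcal{L}_m$ and $\mathcal{M}_n \subseteq \mathcal{M}_m$. In particular, $\mathcal{L}_n \subseteq \mathcal{L}$ and $\mathcal{M}_n \subseteq \mathcal{M}$.
   Context: For an irrational real $\xi$ and positive integer $n$, $\lambda_n(\xi) = \limsup_{s/t \to \xi} \dfrac{\gcd(t,n)}{t^2 \left| \frac{s}{t} - \xi\right|}$ (limsup over rationals $s/t$, $t>0$, tending to $\xi$), and $\mathcal{L}_n = \{\lambda_n(\xi)\in\mathbb{R} : \xi\in\mathbb{R}\setminus\mathbb{Q}\}$. For reals $\xi\ne\xi'$, $\mu_n(\xi,\xi') = \sup_{(s,t)\in\mathbb{Z}^2\setminus\{0\}} \dfrac{\gcd(t,n)\,|\xi-\xi'|}{|s-t\xi|\,|s-t\xi'|}$ (with $\gcd(0,n)=n$), and $\mathcal{M}_n$ is the set of finite values of $\mu_n(\xi,\xi')$ over pairs of reals $\xi\neq\xi'$. The classical Lagrange and Markoff spectra are $\mathcal{L}=\mathcal{L}_1$ and $\mathcal{M}=\mathcal{M}_1$. *)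

From Stdlib Require Import Reals ZArith.
From Coquelicot Require Import Coquelicot.
Open Scope R_scope.

Definition irrational (x : R) : Prop :=
  ~ (exists p q : Z, q <> 0%Z /\ x = IZR p / IZR q).

Definition lag_term (n : nat) (xi : R) (s t : Z) : R :=
  IZR (Z.gcd t (Z.of_nat n)) / (IZR t ^ 2 * Rabs (IZR s / IZR t - xi)).

Definition lag_sup (n : nat) (xi : R) (delta : R) : Rbar :=
  Rbar_lub (fun y : Rbar => exists s t : Z, (0 < t)%Z /\
     0 < Rabs (IZR s / IZR t - xi) < delta /\ y = Finite (lag_term n xi s t)).

(* lambda_n(xi) = limsup_{s/t -> xi} gcd(t,n)/(t^2 |s/t - xi|)
   = inf_{delta > 0} sup_{0<|s/t-xi|<delta} ... , valued in [0,+oo] *)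
Definition lambda_n (n : nat) (xi : R) : Rbar :=
  Rbar_glb (fun y : Rbar => exists delta : R, 0 < delta /\ y = lag_sup n xi delta).

Definition Lspec (n : nat) (r : R) : Prop :=
  exists xi : R, irrational xi /\ lambda_n n xi = Finite r.

(* mu_n(xi,xi') = sup over (s,t) <> (0,0) of gcd(t,n)|xi-xi'|/(|s-t xi||s-t xi'|),
   with gcd(0,n) = n; a vanishing denominator gives +oo *)
Definition mark_term (n : nat) (xi xi' : R) (s t : Z) : Rbar :=
  let d := Rabs (IZR s - IZR t * xi) * Rabs (IZR s - IZR t * xi') in
  if Req_EM_T d 0 then p_infty
  else Finite (IZR (Z.gcd t (Z.of_nat n)) * Rabs (xi - xi') / d).

Definition mu_n (n : nat) (xi xi' : R) : Rbar :=
  Rbar_lub (fun y : Rbar => exists s t : Z, (s <> 0%Z \/ t <> 0%Z) /\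
     y = mark_term n xi xi' s t).

Definition Mspec (n : nat) (r : R) : Prop :=
  exists xi xi' : R, xi <> xi' /\ mu_n n xi xi' = Finite r.

From Stdlib Require Import Reals ZArith Znumtheory Lra Lia List Classical.
From Coquelicot Require Import Coquelicot.
Open Scope R_scope.

(* Only the finitely many values [g = gcd(t, n)] occur in the weights, so a single
   class [gcd(t, n) = g] already carries [lambda_n(xi)] (resp. [mu_n(xi, xi')]).
   With [d = gcd(m, g)] and [c = g / d], [m c = lcm(m, g)] divides [n]. The fraction
   [s/t] for [c xi] and [m] is the fraction [s/(tc)] for [xi] and [n] with weight
   [gcd(t, m) c <= gcd(tc, n)], so [lambda_m(c xi) <= lambda_n(xi)]. Conversely every
   [t] in the class [g] is a multiple [t'c] with [gcd(t', m) c >= g], so the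
   approximations carrying [lambda_n(xi)] give [lambda_m(c xi) >= lambda_n(xi)].
   Scaling both [xi] and [xi'] by [c] works in the same way for [mu]. *)

Lemma Rbar_lub_ub (E : Rbar -> Prop) (x : Rbar) : E x -> Rbar_le x (Rbar_lub E).
Proof. unfold Rbar_lub. destruct (Rbar_ex_lub E) as [l [Hub Hleast]]. auto. Qed.

Lemma Rbar_lub_least (E : Rbar -> Prop) (b : Rbar) :
  (forall x, E x -> Rbar_le x b) -> Rbar_le (Rbar_lub E) b.
Proof. unfold Rbar_lub. destruct (Rbar_ex_lub E) as [l [Hub Hleast]]. auto. Qed.

Lemma Rbar_glb_lb (E : Rbar -> Prop) (x : Rbar) : E x -> Rbar_le (Rbar_glb E) x.
Proof. unfold Rbar_glb. destruct (Rbar_ex_glb E) as [l [Hlb Hgreatest]]. auto. Qed.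

Lemma Rbar_glb_greatest (E : Rbar -> Prop) (b : Rbar) :
  (forall x, E x -> Rbar_le b x) -> Rbar_le b (Rbar_glb E).
Proof. unfold Rbar_glb. destruct (Rbar_ex_glb E) as [l [Hlb Hgreatest]]. auto. Qed.

Lemma Rbar_le_of_forall_pos (r : R) (y : Rbar) :
  (forall e, 0 < e -> Rbar_le (r - e) y) -> Rbar_le r y.
Proof.
  destruct y as [y| |]; simpl; intros H; auto.
  - apply Rnot_lt_le; intros Hlt. specialize (H ((r - y) / 2)). lra.
  - apply (H 1). lra.
Qed.

Lemma Rbar_le_lub_iff (E : Rbar -> Prop) (r : R) :
  Rbar_le r (Rbar_lub E) <-> forall e, 0 < e -> exists y, E y /\ Rbar_lt (r - e) y.
Proof.
  split.
  - intros H e He. apply NNPP; intros Hno.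
    assert (Hub : Rbar_le (Rbar_lub E) (r - e)).
    { apply Rbar_lub_least. intros y Ey. apply Rbar_not_lt_le. eauto. }
    pose proof (Rbar_le_trans _ _ _ H Hub). simpl in *. lra.
  - intros H. apply Rbar_le_of_forall_pos. intros e He.
    destruct (H e He) as [y [Ey Hy]].
    apply Rbar_lt_le, (Rbar_lt_le_trans _ y); auto. apply Rbar_lub_ub; auto.
Qed.

Lemma le_lambda_n_iff (n : nat) (x r : R) :
  Rbar_le r (lambda_n n x) <->
  forall e, 0 < e -> exists s t, (0 < t)%Z /\
    0 < Rabs (IZR s / IZR t - x) < e /\ r - e < lag_term n x s t.
Proof.
  split.
  - intros H e He.
    assert (Hsup : Rbar_le r (lag_sup n x e)).
    { eapply Rbar_le_trans; [exact H|]. apply Rbar_glb_lb. eauto. }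
    destruct (proj1 (Rbar_le_lub_iff _ _) Hsup e He) as [y [[s [t [Ht [Hd ->]]]] Hy]].
    eauto.
  - intros H. apply Rbar_glb_greatest. intros y [d [Hd ->]].
    apply Rbar_le_lub_iff. intros e He.
    destruct (H (Rmin d e)) as [s [t [Ht [Hdist Hlt]]]]; [apply Rmin_pos; auto|].
    pose proof (Rmin_l d e). pose proof (Rmin_r d e).
    exists (Finite (lag_term n x s t)). split; [exists s, t; repeat split; auto; lra|simpl; lra].
Qed.

(* A finite list of candidates cannot all fail for arbitrarily small [e]:
   one candidate fails for some [e0], and then for every [e <= e0]. *)
Lemma exists_in_forall_pos {A : Type} (l : list A) (P : A -> R -> Prop) :
  (forall a e e', P a e -> e <= e' -> P a e') ->
  (forall e, 0 < e -> exists a, In a l /\ P a e) ->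
  exists a, In a l /\ forall e, 0 < e -> P a e.
Proof.
  intros Hmono. induction l as [|a l IH]; intros Hex.
  - destruct (Hex 1 Rlt_0_1) as [a [[] _]].
  - destruct (classic (forall e, 0 < e -> P a e)) as [Ha|Ha].
    + exists a. split; [left|]; auto.
    + apply not_all_ex_not in Ha as [e0 He0]. apply imply_to_and in He0 as [He0 Hna].
      destruct IH as [b [Hb Pb]].
      * intros e He. destruct (Hex (Rmin e e0)) as [b [[<-|Hb] Pb]];
          [apply Rmin_pos; auto| |].
        -- exfalso. apply Hna, (Hmono _ _ _ Pb), Rmin_r.
        -- exists b. split; auto. apply (Hmono _ _ _ Pb), Rmin_l.
      * exists b. split; [right|]; auto.
Qed.

Lemma Z_gcd_range (t N : Z) : (0 < N)%Z -> (1 <= Z.gcd t N <= N)%Z.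
Proof.
  intros HN. pose proof (Z.gcd_nonneg t N).
  assert (Z.gcd t N <> 0%Z) by (rewrite Z.gcd_eq_0; lia).
  split; [lia|]. apply Z.divide_pos_le; auto. apply Z.gcd_divide_r.
Qed.

Lemma In_gcd_seq (t : Z) (n : nat) : (0 < n)%nat ->
  In (Z.gcd t (Z.of_nat n)) (map Z.of_nat (seq 0 (S n))).
Proof.
  intros Hn. pose proof (Z_gcd_range t (Z.of_nat n) ltac:(lia)).
  apply in_map_iff. exists (Z.to_nat (Z.gcd t (Z.of_nat n))). split.
  - apply Z2Nat.id. lia.
  - apply in_seq. lia.
Qed.

(* With [d = gcd(M, g)] and [c = g / d], [M * c = lcm(M, g)] divides [N]. *)
Lemma exists_scaling_factor_gcd (M N g : Z) :
  (0 < M)%Z -> (0 < N)%Z -> (M | N)%Z -> (0 < g)%Z -> (g | N)%Z ->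
  exists c, (0 < c)%Z /\
    (forall t, Z.gcd t M * c <= Z.gcd (t * c) N)%Z /\
    (forall t, Z.gcd t N = g -> exists t', t = (t' * c)%Z /\ (g <= Z.gcd t' M * c)%Z).
Proof.
  intros HM HN HMN Hg HgN.
  set (d := Z.gcd M g). set (c := (g / d)%Z).
  assert (Hd : (0 < d)%Z) by (pose proof (Z_gcd_range M g Hg); lia).
  assert (Hgdc : g = (d * c)%Z) by (apply Zdivide_Zdiv_eq; auto; apply Z.gcd_divide_r).
  assert (Hc : (0 < c)%Z) by nia.
  assert (HMc : (M * c | N)%Z).
  { apply Z.divide_abs_l. change (Z.lcm M g | N)%Z. apply Z.lcm_least; auto. }
  exists c. split; [|split]; auto.
  - intros t.
    replace (Z.gcd t M * c)%Z with (Z.gcd (t * c) (M * c))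
      by (rewrite Z.gcd_mul_mono_r, Z.abs_eq; lia).
    apply Z.divide_pos_le; [pose proof (Z_gcd_range (t * c) N HN); lia|].
    apply Z.gcd_greatest; [apply Z.gcd_divide_l|].
    eapply Z.divide_trans; [apply Z.gcd_divide_r|exact HMc].
  - intros t Ht. destruct (Z.gcd_divide_l t N) as [k Hk]. rewrite Ht, Hgdc in Hk.
    exists (k * d)%Z. split; [lia|]. rewrite Hgdc.
    apply Z.mul_le_mono_pos_r; auto.
    apply Z.divide_pos_le; [pose proof (Z_gcd_range (k * d) M HM); lia|].
    apply Z.gcd_greatest; [exists k; lia|apply Z.gcd_divide_l].
Qed.

(* Some gcd class [gcd(t, n) = g] carries the property for all [e]; the
   factor [c] of [exists_scaling_factor_gcd] for [g] maps that class into [m]. *)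
Lemma exists_scaling_factor (m n : nat) (Q : Z -> R -> Prop) :
  (0 < m)%nat -> (0 < n)%nat -> Nat.divide m n ->
  (forall t e e', Q t e -> e <= e' -> Q t e') ->
  (forall e, 0 < e -> exists t, Q t e) ->
  exists c, (0 < c)%Z /\
    (forall t, Z.gcd t (Z.of_nat m) * c <= Z.gcd (t * c) (Z.of_nat n))%Z /\
    (forall e, 0 < e -> exists t, Q (t * c)%Z e /\
       (Z.gcd (t * c) (Z.of_nat n) <= Z.gcd t (Z.of_nat m) * c)%Z).
Proof.
  intros Hm Hn [k Hk] Hmono Hex. set (N := Z.of_nat n).
  destruct (exists_in_forall_pos (map Z.of_nat (seq 0 (S n)))
              (fun g e => exists t, Z.gcd t N = g /\ Q t e)) as [g [_ Hg]].
  { intros g e e' [t [Ht HQ]] He. exists t. split; auto. apply (Hmono _ _ _ HQ He). }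
  { intros e He. destruct (Hex e He) as [t HQ].
    exists (Z.gcd t N). split; [apply In_gcd_seq; auto|]. exists t. auto. }
  destruct (Hg 1 Rlt_0_1) as [t1 [Hg1 _]].
  destruct (exists_scaling_factor_gcd (Z.of_nat m) N g) as [c [Hc [Hup Hdown]]];
    [lia|lia|exists (Z.of_nat k); lia|pose proof (Z_gcd_range t1 N ltac:(lia)); lia|
     rewrite <- Hg1; apply Z.gcd_divide_r|].
  exists c. split; [|split]; auto.
  intros e He. destruct (Hg e He) as [t [Hgt HQ]].
  destruct (Hdown t Hgt) as [t' [-> Hw]].
  exists t'. rewrite Hgt. auto.
Qed.

Lemma irrational_IZR_mul (c : Z) (x : R) :
  (0 < c)%Z -> irrational x -> irrational (IZR c * x).
Proof.
  intros Hc Hx [p [q [Hq E]]]. apply Hx. exists p, (c * q)%Z. split; [lia|].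
  assert (IZR c <> 0) by (apply not_0_IZR; lia).
  assert (IZR q <> 0) by (apply not_0_IZR; lia).
  rewrite mult_IZR. apply (Rmult_eq_reg_l (IZR c)); auto. rewrite E. field. auto.
Qed.

Lemma Rabs_div_sub_mul (s t c x : R) : t <> 0 -> 0 < c ->
  Rabs (s / t - c * x) = c * Rabs (s / (t * c) - x).
Proof.
  intros Ht Hc. replace (s / t - c * x) with (c * (s / (t * c) - x)) by (field; lra).
  rewrite Rabs_mult, (Rabs_pos_eq c); lra.
Qed.

Definition lag_weighted (w x : R) (s t : Z) : R :=
  w / (IZR t ^ 2 * Rabs (IZR s / IZR t - x)).

Definition mark_weighted (w x x' : R) (s t : Z) : Rbar :=
  let d := Rabs (IZR s - IZR t * x) * Rabs (IZR s - IZR t * x') in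
  if Req_EM_T d 0 then p_infty else Finite (w * Rabs (x - x') / d).

Lemma lag_weighted_le_weight (w w' x : R) (s t : Z) :
  w <= w' -> lag_weighted w x s t <= lag_weighted w' x s t.
Proof.
  intros Hw. unfold lag_weighted.
  set (D := IZR t ^ 2 * Rabs (IZR s / IZR t - x)).
  assert (HD : 0 <= D) by (apply Rmult_le_pos; [apply pow2_ge_0|apply Rabs_pos]).
  destruct (Req_dec D 0) as [->|HD0].
  - unfold Rdiv. rewrite Rinv_0. lra.
  - apply Rmult_le_compat_r; auto. left. apply Rinv_0_lt_compat. lra.
Qed.

Lemma mark_weighted_le_weight (w w' x x' : R) (s t : Z) :
  w <= w' -> Rbar_le (mark_weighted w x x' s t) (mark_weighted w' x x' s t).
Proof.
  intros Hw. unfold mark_weighted. cbv zeta.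
  destruct (Req_EM_T _ 0) as [_|HD0]; simpl; auto.
  apply Rmult_le_compat_r.
  - left. apply Rinv_0_lt_compat.
    pose proof (Rmult_le_pos _ _ (Rabs_pos (IZR s - IZR t * x)) (Rabs_pos (IZR s - IZR t * x'))).
    lra.
  - apply Rmult_le_compat_r; auto. apply Rabs_pos.
Qed.

Lemma lag_term_scale (m : nat) (c s t : Z) (x : R) : (0 < c)%Z -> (t <> 0)%Z ->
  lag_term m (IZR c * x) s t = lag_weighted (IZR (Z.gcd t (Z.of_nat m) * c)) x s (t * c).
Proof.
  intros Hc Ht. unfold lag_term, lag_weighted. rewrite !mult_IZR.
  assert (HC : 0 < IZR c) by (apply IZR_lt; lia).
  assert (HT : IZR t <> 0) by (apply not_0_IZR; lia).
  rewrite Rabs_div_sub_mul by auto.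
  generalize (Rabs (IZR s / (IZR t * IZR c) - x)). intros a.
  unfold Rdiv. rewrite !Rinv_mult.
  generalize (/ a). intros inv_a.
  field. split; lra.
Qed.

Lemma mark_term_scale (m : nat) (c s t : Z) (x x' : R) : (0 < c)%Z ->
  mark_term m (IZR c * x) (IZR c * x') s t =
  mark_weighted (IZR (Z.gcd t (Z.of_nat m) * c)) x x' s (t * c).
Proof.
  intros Hc. unfold mark_term, mark_weighted. cbv zeta. rewrite !mult_IZR.
  assert (HC : 0 < IZR c) by (apply IZR_lt; lia).
  rewrite <- !Rmult_assoc.
  destruct (Req_EM_T _ 0); auto. f_equal.
  replace (IZR c * x - IZR c * x') with (IZR c * (x - x')) by ring.
  rewrite Rabs_mult, (Rabs_pos_eq (IZR c)) by lra.
  f_equal. ring.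
Qed.

Section ScalingUpperBound.

Variables (m n : nat) (c : Z).
Hypothesis c_pos : (0 < c)%Z.
Hypothesis gcd_scale_le :
  forall t, (Z.gcd t (Z.of_nat m) * c <= Z.gcd (t * c) (Z.of_nat n))%Z.

Lemma lag_sup_scale_le (x d : R) :
  Rbar_le (lag_sup m (IZR c * x) (IZR c * d)) (lag_sup n x d).
Proof.
  assert (HC : 0 < IZR c) by (apply IZR_lt; lia).
  apply Rbar_lub_least. intros y [s [t [Ht [Hdist ->]]]].
  rewrite Rabs_div_sub_mul in Hdist by (auto; apply not_0_IZR; lia).
  apply Rbar_le_trans with (Finite (lag_term n x s (t * c))).
  - simpl. rewrite lag_term_scale by lia.
    apply lag_weighted_le_weight, IZR_le, gcd_scale_le.
  - apply Rbar_lub_ub. exists s, (t * c)%Z. rewrite mult_IZR.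
    repeat split; try nia; nra.
Qed.

Lemma lambda_n_scale_le (x : R) : Rbar_le (lambda_n m (IZR c * x)) (lambda_n n x).
Proof.
  assert (HC : 0 < IZR c) by (apply IZR_lt; lia).
  apply Rbar_glb_greatest. intros y [d [Hd ->]].
  eapply Rbar_le_trans; [|apply lag_sup_scale_le].
  apply Rbar_glb_lb. exists (IZR c * d). split; auto. nra.
Qed.

Lemma mu_n_scale_le (x x' : R) :
  Rbar_le (mu_n m (IZR c * x) (IZR c * x')) (mu_n n x x').
Proof.
  apply Rbar_lub_least. intros y [s [t [Hst ->]]].
  rewrite mark_term_scale by auto.
  eapply Rbar_le_trans; [apply mark_weighted_le_weight, IZR_le, gcd_scale_le|].
  apply Rbar_lub_ub. exists s, (t * c)%Z. split; [nia|reflexivity].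
Qed.

End ScalingUpperBound.

Lemma Lspec_dvd (m n : nat) (r : R) : (0 < m)%nat -> (0 < n)%nat -> Nat.divide m n ->
  Lspec n r -> Lspec m r.
Proof.
  intros Hm Hn Hmn [x [Hx Hl]].
  destruct (exists_scaling_factor m n (fun t e => exists s, (0 < t)%Z /\
              0 < Rabs (IZR s / IZR t - x) < e /\ r - e < lag_term n x s t))
    as [c [Hc [Hup Hdown]]]; auto.
  { intros t e e' [s [Ht [Hdist Hlt]]] He. exists s. repeat split; auto; lra. }
  { assert (Hr : Rbar_le r (lambda_n n x)) by (rewrite Hl; apply Rbar_le_refl).
    intros e He. destruct (proj1 (le_lambda_n_iff n x r) Hr e He) as [s [t Hst]]. eauto. }
  assert (HC : 1 <= IZR c) by (apply IZR_le; lia).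
  exists (IZR c * x). split; [apply irrational_IZR_mul; auto|].
  apply Rbar_le_antisym; [rewrite <- Hl; apply lambda_n_scale_le; auto|].
  apply le_lambda_n_iff. intros e He.
  destruct (Hdown (e / IZR c)) as [t [[s [Ht [Hdist Hlt]]] Hw]];
    [apply Rdiv_lt_0_compat; lra|].
  assert (Hdiv : e / IZR c <= e) by (apply Rle_div_l; nra).
  exists s, t. split; [nia|]. split.
  - rewrite mult_IZR in Hdist. rewrite Rabs_div_sub_mul by (lra || apply not_0_IZR; nia).
    replace e with (IZR c * (e / IZR c)) by (field; lra). split; nra.
  - rewrite lag_term_scale by nia.
    eapply Rlt_le_trans with (lag_term n x s (t * c)); [lra|].
    apply lag_weighted_le_weight, IZR_le, Hw.
Qed.

Lemma Mspec_dvd (m n : nat) (r : R) : (0 < m)%nat -> (0 < n)%nat -> Nat.divide m n ->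
  Mspec n r -> Mspec m r.
Proof.
  intros Hm Hn Hmn [x [x' [Hne Hmu]]].
  destruct (exists_scaling_factor m n (fun t e => exists s, (s <> 0 \/ t <> 0)%Z /\
              Rbar_lt (r - e) (mark_term n x x' s t)))
    as [c [Hc [Hup Hdown]]]; auto.
  { intros t e e' [s [Hst Hlt]] He. exists s. split; auto.
    eapply Rbar_le_lt_trans; [|exact Hlt]. simpl. lra. }
  { assert (Hr : Rbar_le r (mu_n n x x')) by (rewrite Hmu; apply Rbar_le_refl).
    intros e He.
    destruct (proj1 (Rbar_le_lub_iff _ r) Hr e He) as [y [[s [t [Hst ->]]] Hlt]]. eauto. }
  assert (HC : 0 < IZR c) by (apply IZR_lt; lia).
  exists (IZR c * x), (IZR c * x'). split.
  { intros E. apply Hne, (Rmult_eq_reg_l (IZR c)); lra. }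
  apply Rbar_le_antisym; [rewrite <- Hmu; apply mu_n_scale_le; auto|].
  apply Rbar_le_lub_iff. intros e He.
  destruct (Hdown e He) as [t [[s [Hst Hlt]] Hw]].
  exists (mark_term m (IZR c * x) (IZR c * x') s t). split.
  - exists s, t. split; [nia|reflexivity].
  - eapply Rbar_lt_le_trans; [exact Hlt|]. rewrite mark_term_scale by auto.
    apply mark_weighted_le_weight, IZR_le, Hw.
Qed.

Theorem corollary3p2 (m n : nat) :
  (0 < m)%nat -> (0 < n)%nat -> Nat.divide m n ->
  (forall r : R, Lspec n r -> Lspec m r) /\
  (forall r : R, Mspec n r -> Mspec m r) /\
  (forall r : R, Lspec n r -> Lspec 1 r) /\
  (forall r : R, Mspec n r -> Mspec 1 r).
Proof.
  intros Hm Hn Hmn. repeat split.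
  - intros r. apply Lspec_dvd; auto.
  - intros r. apply Mspec_dvd; auto.
  - intros r. apply Lspec_dvd; auto using Nat.divide_1_l.
  - intros r. apply Mspec_dvd; auto using Nat.divide_1_l.
Qed.
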